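(* Let $L_1,\dots,L_n$ be directed lines in $\mathbb{R}^3$ such that no two of them are coplanar, and suppose $d(L_i,L_j)=1$ for all $1\le i<j\le n$, where $d(L,L')=\min_{x\in L,\,y\in L'}\|x-y\|$. Then there do not exist five distinct indices $i_1,\dots,i_5\in\{1,\dots,n\}$ such that the chiralities $\varepsilon(L_{i_a},L_{i_b})$, $1\le a<b\le 5$, are all equal (i.e. all $+1$ or all $-1$). Equivalently, the chirality graph of $\{L_1,\dots,L_n\}$ contains no monochromatic $K_5$.
   Context: A directed line in $\mathbb{R}^3$ is a set $L=\mathbb{R}v+w$ with a chosen unit vector $v\in\mathbb{R}^3$ (its direction) and some $w\in\mathbb{R}^3$ (determined modulo $\mathbb{R}v$). For two directed lines $L=\mathbb{R}v+w$, $L'=\mathbb{R}v'+w'$ that are not coplanar (i.e. skew), their chirality is $\varepsilon(L,L')=\operatorname{sgn}\langle v\times v',\,w-w'\rangle\in\{\pm1\}$, where $\langle\cdot,\cdot\rangle$ is the standard inner product and $\times$ the cross product; this is independent of the choices of $w,w'$ and symmetric in $L,L'$. The chirality graph of $\{L_1,\dots,L_n\}$ (pairwise non-coplanar directed lines) is the complete graph on $\{1,\dots,n\}$ with edge $\{i,j\}$ labelled by the sign $\varepsilon(L_i,L_j)$; a monochromatic $K_5$ is a set of 5 vertices all of whose 10 edges carry the same sign. *)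

From Stdlib Require Import Reals Lra.
Open Scope R_scope.

Definition vec3 : Type := (R * R * R)%type.

Definition vx (u : vec3) : R := fst (fst u).
Definition vy (u : vec3) : R := snd (fst u).
Definition vz (u : vec3) : R := snd u.

Definition vadd (u v : vec3) : vec3 := (vx u + vx v, vy u + vy v, vz u + vz v).
Definition vsub (u v : vec3) : vec3 := (vx u - vx v, vy u - vy v, vz u - vz v).
Definition vscale (a : R) (u : vec3) : vec3 := (a * vx u, a * vy u, a * vz u).
Definition dot (u v : vec3) : R := vx u * vx v + vy u * vy v + vz u * vz v.
Definition cross (u v : vec3) : vec3 :=
  (vy u * vz v - vz u * vy v, vz u * vx v - vx u * vz v, vx u * vy v - vy u * vx v).
Definition norm (u : vec3) : R := sqrt (dot u u).

Record dline : Type := DLine { dir : vec3; base : vec3 }.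

Definition unit_dir (L : dline) : Prop := norm (dir L) = 1.

Definition pt (L : dline) (s : R) : vec3 := vadd (vscale s (dir L)) (base L).

Definition coplanar (L L' : dline) : Prop :=
  exists (n : vec3) (c : R), n <> (0, 0, 0) /\
    (forall s, dot n (pt L s) = c) /\ (forall s, dot n (pt L' s) = c).

Definition line_dist_is (L L' : dline) (r : R) : Prop :=
  (forall s t, r <= norm (vsub (pt L s) (pt L' t))) /\
  (exists s t, norm (vsub (pt L s) (pt L' t)) = r).

(* Chirality sgn <v x v', w - w'> as a real in {-1,0,1} (nonzero for skew lines). *)
Definition chirality (L L' : dline) : R :=
  let x := dot (cross (dir L) (dir L')) (vsub (base L) (base L')) in
  if Rlt_dec 0 x then 1 else if Rlt_dec x 0 then -1 else 0.

(* For skew lines at distance 1 the moment <v x v', w - w'> equals the chirality times |v x v'|.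
   Whenever sum_k a_k v_k = 0, the moments satisfy sum_{k<l} a_k a_l <v_k x v_l, w_k - w_l> = 0, so for
   lines of common chirality sum_{k<l} a_k a_l |v_k x v_l| = 0.  For three lines this forces the
   directions to be independent.  For four lines, with the cofactor relation as coefficients, it forces
   the product of the four triple determinants to be negative: coefficients of one sign make every
   term positive, and a 2-2 sign split makes the sum negative by the strict triangle inequality in the
   skew quadrilateral with sides a_k v_k.  In a K5 each triple lies in two of the five quadruples, so the
   product of the five negative quadruple products would be a square. *)

From Stdlib Require Import Reals Lra Psatz Lia.
Open Scope R_scope.

Definition vzero : vec3 := (0, 0, 0).

Definition det3 (a b c : vec3) : R := dot a (cross b c).

Ltac vdestruct := repeat match goal with
  | u : vec3 |- _ =>
    let x := fresh "x" in let y := fresh "y" in let z := fresh "z" in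
    destruct u as [[x y] z] end.
Ltac vunfold := unfold vzero, det3, dot, cross, vadd, vsub, vscale, vx, vy, vz in *; simpl in *.

Lemma vec3_eq (a b c a' b' c' : R) : a = a' -> b = b' -> c = c' -> ((a, b, c) : vec3) = (a', b', c').
Proof. intros; subst; reflexivity. Qed.

Ltac vring := vdestruct; vunfold; apply vec3_eq; ring.

Lemma dot_self_nonneg u : 0 <= dot u u.
Proof. vdestruct; vunfold; nra. Qed.

Lemma dot_self_pos u : u <> vzero -> 0 < dot u u.
Proof.
  intro Hu. destruct (Rle_lt_dec (dot u u) 0) as [Hle|Hlt]; [exfalso|exact Hlt].
  apply Hu. vdestruct; vunfold. apply vec3_eq; nra.
Qed.

Lemma norm_nonneg u : 0 <= norm u.
Proof. apply sqrt_pos. Qed.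

Lemma norm_sq u : norm u * norm u = dot u u.
Proof. apply sqrt_sqrt, dot_self_nonneg. Qed.

Lemma norm_pos u : u <> vzero -> 0 < norm u.
Proof.
  intro Hu. pose proof (dot_self_pos u Hu). pose proof (norm_sq u). pose proof (norm_nonneg u). nra.
Qed.

Lemma norm_eq_sq u r : 0 <= r -> dot u u = r * r -> norm u = r.
Proof.
  intros Hr Hu. apply Rsqr_inj; [apply norm_nonneg | exact Hr |].
  unfold Rsqr. rewrite norm_sq. exact Hu.
Qed.

Lemma norm_scale a u : norm (vscale a u) = Rabs a * norm u.
Proof.
  apply norm_eq_sq.
  - apply Rmult_le_pos; [apply Rabs_pos | apply norm_nonneg].
  - replace (Rabs a * norm u * (Rabs a * norm u)) with ((Rabs a * Rabs a) * (norm u * norm u)) by ring.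
    rewrite <- Rabs_mult, Rabs_pos_eq, norm_sq by nra. vdestruct; vunfold; ring.
Qed.

Lemma norm_cross_comm u v : norm (cross u v) = norm (cross v u).
Proof. unfold norm; f_equal; vdestruct; vunfold; ring. Qed.

Lemma norm_vsub_comm u v : norm (vsub u v) = norm (vsub v u).
Proof. unfold norm; f_equal; vdestruct; vunfold; ring. Qed.

Lemma vscale_neq0 a u : a <> 0 -> u <> vzero -> vscale a u <> vzero.
Proof.
  intros Ha Hu E. apply dot_self_pos in Hu.
  assert (Hs : dot (vscale a u) (vscale a u) = a * a * dot u u) by (vdestruct; vunfold; ring).
  rewrite E in Hs. vunfold. assert (0 < a * a) by nra. nra.
Qed.

Lemma lagrange_identity u v : dot u u * dot v v = dot u v * dot u v + dot (cross u v) (cross u v).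
Proof. vdestruct; vunfold; ring. Qed.

Lemma Rabs_dot_le u v : Rabs (dot u v) <= norm u * norm v.
Proof.
  pose proof (norm_nonneg u); pose proof (norm_nonneg v).
  pose proof (norm_sq u); pose proof (norm_sq v).
  pose proof (lagrange_identity u v); pose proof (dot_self_nonneg (cross u v)).
  assert (0 <= norm u * norm v) by (apply Rmult_le_pos; auto).
  assert (dot u v * dot u v <= (norm u * norm v) * (norm u * norm v)) by nra.
  apply Rabs_le; split; nra.
Qed.

Lemma norm_mul_cross0 u v : cross u v = vzero -> norm u * norm v = Rabs (dot u v).
Proof.
  intro H. apply Rsqr_inj.
  - apply Rmult_le_pos; apply norm_nonneg.
  - apply Rabs_pos.
  - rewrite <- Rsqr_abs. unfold Rsqr.
    replace (norm u * norm v * (norm u * norm v)) with ((norm u * norm u) * (norm v * norm v)) by ring.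
    rewrite !norm_sq, lagrange_identity, H. vunfold. ring.
Qed.

Lemma dot_lt_norm_mul u v : cross u v <> vzero -> dot u v < norm u * norm v.
Proof.
  intro H. apply dot_self_pos in H.
  pose proof (norm_nonneg u); pose proof (norm_nonneg v).
  pose proof (norm_sq u); pose proof (norm_sq v); pose proof (lagrange_identity u v).
  assert (0 <= norm u * norm v) by (apply Rmult_le_pos; auto).
  destruct (Rlt_le_dec (dot u v) (norm u * norm v)) as [Hlt|Hge]; [exact Hlt|].
  assert (norm u * norm v * (norm u * norm v) <= dot u v * dot u v) by (apply Rmult_le_compat; lra).
  nra.
Qed.

Lemma norm_add_lt u v : cross u v <> vzero -> norm (vadd u v) < norm u + norm v.
Proof.
  intro H. pose proof (dot_lt_norm_mul u v H).
  pose proof (norm_nonneg u); pose proof (norm_nonneg v); pose proof (norm_nonneg (vadd u v)).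
  pose proof (norm_sq u); pose proof (norm_sq v); pose proof (norm_sq (vadd u v)).
  assert (dot (vadd u v) (vadd u v) = dot u u + dot v v + 2 * dot u v) by (vdestruct; vunfold; ring).
  nra.
Qed.

Lemma vzero_dec u : u = vzero \/ u <> vzero.
Proof.
  destruct (Req_dec (dot u u) 0) as [H|H]; [left | right].
  - vdestruct; vunfold. apply vec3_eq; nra.
  - intro E. apply H. rewrite E. vunfold. ring.
Qed.

Lemma det3_neq0_r a b c : det3 a b c <> 0 -> c <> vzero.
Proof. intros H E. subst c. apply H. vdestruct; vunfold; ring. Qed.

Lemma norm_cross_scale a b u v :
  norm (cross (vscale a u) (vscale b v)) = Rabs (a * b) * norm (cross u v).
Proof.
  rewrite <- norm_scale. unfold norm. f_equal. vdestruct; vunfold; ring.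
Qed.

(* [(a x c) x (b x c) = det(a,b,c) c]: the two summands are parallel only when a, b, c are dependent. *)
Lemma norm_cross_add_lt a b c : det3 a b c <> 0 ->
  norm (cross (vadd a b) c) < norm (cross a c) + norm (cross b c).
Proof.
  intro H. replace (cross (vadd a b) c) with (vadd (cross a c) (cross b c)) by vring.
  apply norm_add_lt.
  replace (cross (cross a c) (cross b c)) with (vscale (det3 a b c) c) by vring.
  apply vscale_neq0; [exact H | exact (det3_neq0_r a b c H)].
Qed.

Lemma closed_triangle_norm_cross x1 x2 x3 : vadd (vadd x1 x2) x3 = vzero ->
  norm (cross x1 x3) = norm (cross x1 x2) /\ norm (cross x2 x3) = norm (cross x1 x2).
Proof.
  intro H. assert (Hx3 : x3 = vscale (-1) (vadd x1 x2)).
  { vdestruct; vunfold. injection H; intros. apply vec3_eq; lra. }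
  subst x3. split; unfold norm; f_equal; vdestruct; vunfold; ring.
Qed.

Lemma closed_quadrilateral_norm_cross_lt x1 x2 x3 x4 :
  vadd (vadd x1 x2) (vadd x3 x4) = vzero -> det3 x1 x2 x3 <> 0 ->
  norm (cross x1 x2) + norm (cross x3 x4) <
  norm (cross x1 x3) + norm (cross x1 x4) + norm (cross x2 x3) + norm (cross x2 x4).
Proof.
  intros Hsum Hdet.
  assert (Hx4 : x4 = vscale (-1) (vadd (vadd x1 x2) x3)).
  { vdestruct; vunfold. injection Hsum; intros. apply vec3_eq; lra. }
  assert (D4 : det3 x1 x2 x4 <> 0).
  { replace (det3 x1 x2 x4) with (- det3 x1 x2 x3) by (subst x4; vdestruct; vunfold; ring). lra. }
  assert (D31 : det3 x3 x4 x1 <> 0).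
  { replace (det3 x3 x4 x1) with (det3 x1 x2 x3) by (subst x4; vdestruct; vunfold; ring). exact Hdet. }
  assert (D32 : det3 x3 x4 x2 <> 0).
  { replace (det3 x3 x4 x2) with (- det3 x1 x2 x3) by (subst x4; vdestruct; vunfold; ring). lra. }
  pose proof (norm_cross_add_lt x1 x2 x3 Hdet) as I3.
  pose proof (norm_cross_add_lt x1 x2 x4 D4) as I4.
  pose proof (norm_cross_add_lt x3 x4 x1 D31) as I1.
  pose proof (norm_cross_add_lt x3 x4 x2 D32) as I2.
  replace (norm (cross (vadd x1 x2) x3)) with (norm (cross x3 x4)) in I3
    by (unfold norm; f_equal; subst x4; vdestruct; vunfold; ring).
  replace (norm (cross (vadd x1 x2) x4)) with (norm (cross x3 x4)) in I4
    by (unfold norm; f_equal; subst x4; vdestruct; vunfold; ring).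
  replace (norm (cross (vadd x3 x4) x1)) with (norm (cross x1 x2)) in I1
    by (unfold norm; f_equal; subst x4; vdestruct; vunfold; ring).
  replace (norm (cross (vadd x3 x4) x2)) with (norm (cross x1 x2)) in I2
    by (unfold norm; f_equal; subst x4; vdestruct; vunfold; ring).
  rewrite (norm_cross_comm x3 x1), (norm_cross_comm x4 x1) in I1.
  rewrite (norm_cross_comm x3 x2), (norm_cross_comm x4 x2) in I2.
  lra.
Qed.

Definition cross_form (u1 u2 u3 u4 : vec3) (c1 c2 c3 c4 : R) : R :=
  c1 * c2 * norm (cross u1 u2) + c1 * c3 * norm (cross u1 u3) + c1 * c4 * norm (cross u1 u4)
  + c2 * c3 * norm (cross u2 u3) + c2 * c4 * norm (cross u2 u4) + c3 * c4 * norm (cross u3 u4).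

Definition lin_comb4 (u1 u2 u3 u4 : vec3) (c1 c2 c3 c4 : R) : vec3 :=
  vadd (vadd (vscale c1 u1) (vscale c2 u2)) (vadd (vscale c3 u3) (vscale c4 u4)).

Lemma scaled_cross_term a b u v : 0 < a * b ->
  a * b * norm (cross u v) = norm (cross (vscale a u) (vscale b v)).
Proof. intro H. rewrite norm_cross_scale, Rabs_pos_eq by lra. reflexivity. Qed.

Lemma scaled_cross_term_neg a b u v : a * b < 0 ->
  a * b * norm (cross u v) = - norm (cross (vscale a u) (vscale b v)).
Proof. intro H. rewrite norm_cross_scale, Rabs_left by lra. ring. Qed.

(* With [x_k = c_k u_k], the relation closes the skew quadrilateral [x_1 x_2 x_3 x_4]. *)
Lemma cross_form_split_neg u1 u2 u3 u4 c1 c2 c3 c4 :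
  0 < c1 -> 0 < c2 -> c3 < 0 -> c4 < 0 ->
  lin_comb4 u1 u2 u3 u4 c1 c2 c3 c4 = vzero -> det3 u1 u2 u3 <> 0 ->
  cross_form u1 u2 u3 u4 c1 c2 c3 c4 < 0.
Proof.
  intros H1 H2 H3 H4 Hrel Hdet.
  assert (Hx : det3 (vscale c1 u1) (vscale c2 u2) (vscale c3 u3) <> 0).
  { replace (det3 (vscale c1 u1) (vscale c2 u2) (vscale c3 u3)) with (c1 * c2 * c3 * det3 u1 u2 u3)
      by (vdestruct; vunfold; ring).
    assert (0 < c1 * c2) by nra. assert (c1 * c2 * c3 < 0) by nra. nra. }
  pose proof (closed_quadrilateral_norm_cross_lt _ _ _ _ Hrel Hx).
  unfold cross_form.
  rewrite (scaled_cross_term c1 c2), (scaled_cross_term c3 c4),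
    (scaled_cross_term_neg c1 c3), (scaled_cross_term_neg c1 c4),
    (scaled_cross_term_neg c2 c3), (scaled_cross_term_neg c2 c4) by nra.
  lra.
Qed.

Lemma cross_form_pos u1 u2 u3 u4 c1 c2 c3 c4 :
  0 < c1 -> 0 < c2 -> 0 < c3 -> 0 < c4 -> cross u1 u2 <> vzero ->
  0 < cross_form u1 u2 u3 u4 c1 c2 c3 c4.
Proof.
  intros H1 H2 H3 H4 H12.
  assert (T : forall a b v, 0 < a -> 0 < b -> 0 <= a * b * norm v).
  { intros. apply Rmult_le_pos; [nra | apply norm_nonneg]. }
  assert (0 < c1 * c2 * norm (cross u1 u2)) by (apply Rmult_lt_0_compat; [nra | apply norm_pos, H12]).
  unfold cross_form.
  pose proof (T c1 c3 (cross u1 u3) H1 H3); pose proof (T c1 c4 (cross u1 u4) H1 H4).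
  pose proof (T c2 c3 (cross u2 u3) H2 H3); pose proof (T c2 c4 (cross u2 u4) H2 H4).
  pose proof (T c3 c4 (cross u3 u4) H3 H4).
  lra.
Qed.

Lemma cross_form_zero_sign_pos u1 u2 u3 u4 c1 c2 c3 c4 : 0 < c1 ->
  lin_comb4 u1 u2 u3 u4 c1 c2 c3 c4 = vzero -> det3 u1 u2 u3 <> 0 ->
  c1 * c2 * c3 * c4 <> 0 -> cross_form u1 u2 u3 u4 c1 c2 c3 c4 = 0 ->
  c1 * c2 * c3 * c4 < 0.
Proof.
  intros H1 Hrel Hdet Hprod Hform.
  destruct (Rlt_le_dec (c1 * c2 * c3 * c4) 0) as [Hneg|Hnn]; [exact Hneg | exfalso].
  assert (Hpos : 0 < c1 * c2 * c3 * c4) by lra. clear Hnn Hprod.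
  assert (H12 : cross u1 u2 <> vzero).
  { intro E. apply Hdet. unfold det3. replace (dot u1 (cross u2 u3)) with (dot u3 (cross u1 u2))
      by (vdestruct; vunfold; ring). rewrite E. vunfold. ring. }
  destruct (Rlt_or_le 0 c2) as [H2|H2]; destruct (Rlt_or_le 0 c3) as [H3|H3].
  - assert (H4 : 0 < c4).
    { assert (0 < c1 * c2 * c3) by (repeat apply Rmult_lt_0_compat; lra). nra. }
    pose proof (cross_form_pos u1 u2 u3 u4 c1 c2 c3 c4 H1 H2 H3 H4 H12). lra.
  - assert (H3' : c3 < 0) by (destruct H3; [lra | subst; lra]).
    assert (H4 : c4 < 0).
    { assert (0 < c1 * c2) by nra. assert (c1 * c2 * c3 < 0) by nra. nra. }
    pose proof (cross_form_split_neg u1 u2 u3 u4 c1 c2 c3 c4 H1 H2 H3' H4 Hrel Hdet). lra.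
  - assert (H2' : c2 < 0) by (destruct H2; [lra | subst; lra]).
    assert (H4 : c4 < 0).
    { assert (c1 * c2 < 0) by nra. assert (c1 * c2 * c3 < 0) by nra. nra. }
    assert (cross_form u1 u3 u2 u4 c1 c3 c2 c4 < 0).
    { apply cross_form_split_neg; auto.
      - rewrite <- Hrel. unfold lin_comb4. vring.
      - replace (det3 u1 u3 u2) with (- det3 u1 u2 u3) by (vdestruct; vunfold; ring). lra. }
    unfold cross_form in *. rewrite (norm_cross_comm u3 u2) in *. lra.
  - assert (H2' : c2 < 0) by (destruct H2; [lra | subst; lra]).
    assert (H3' : c3 < 0) by (destruct H3; [lra | subst; lra]).
    assert (H4 : 0 < c4).
    { assert (c1 * c2 < 0) by nra. assert (0 < c1 * c2 * c3) by nra. nra. }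
    assert (cross_form u2 u3 u1 u4 (- c2) (- c3) (- c1) (- c4) < 0).
    { apply cross_form_split_neg; try lra.
      - replace vzero with (vscale (-1) (lin_comb4 u1 u2 u3 u4 c1 c2 c3 c4))
          by (rewrite Hrel; vunfold; apply vec3_eq; ring).
        unfold lin_comb4. vring.
      - replace (det3 u2 u3 u1) with (det3 u1 u2 u3) by (vdestruct; vunfold; ring). exact Hdet. }
    unfold cross_form in *. rewrite (norm_cross_comm u2 u1), (norm_cross_comm u3 u1) in *. lra.
Qed.

Lemma cross_form_zero_sign u1 u2 u3 u4 c1 c2 c3 c4 :
  lin_comb4 u1 u2 u3 u4 c1 c2 c3 c4 = vzero -> det3 u1 u2 u3 <> 0 ->
  c1 * c2 * c3 * c4 <> 0 -> cross_form u1 u2 u3 u4 c1 c2 c3 c4 = 0 ->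
  c1 * c2 * c3 * c4 < 0.
Proof.
  intros Hrel Hdet Hprod Hform.
  destruct (Rlt_or_le 0 c1) as [H1|H1].
  - exact (cross_form_zero_sign_pos _ _ _ _ _ _ _ _ H1 Hrel Hdet Hprod Hform).
  - assert (H1' : 0 < - c1) by (destruct H1; [lra | subst; exfalso; apply Hprod; ring]).
    replace (c1 * c2 * c3 * c4) with (- c1 * - c2 * - c3 * - c4) in * by ring.
    apply (cross_form_zero_sign_pos u1 u2 u3 u4); auto.
    + replace vzero with (vscale (-1) (lin_comb4 u1 u2 u3 u4 c1 c2 c3 c4))
        by (rewrite Hrel; vunfold; apply vec3_eq; ring).
      unfold lin_comb4. vring.
    + rewrite <- Hform. unfold cross_form. ring.
Qed.

Definition moment (L L' : dline) : R := dot (cross (dir L) (dir L')) (vsub (base L) (base L')).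

Lemma moment_pt L L' s t : dot (cross (dir L) (dir L')) (vsub (pt L s) (pt L' t)) = moment L L'.
Proof. destruct L, L'; unfold moment, pt; simpl; vdestruct; vunfold; ring. Qed.

(* The left-hand side equals [sum_k a_k <v_k x (sum_l a_l v_l), w_k>]. *)
Lemma moment_relation4 (L1 L2 L3 L4 : dline) a1 a2 a3 a4 :
  lin_comb4 (dir L1) (dir L2) (dir L3) (dir L4) a1 a2 a3 a4 = vzero ->
  a1 * a2 * moment L1 L2 + a1 * a3 * moment L1 L3 + a1 * a4 * moment L1 L4
  + a2 * a3 * moment L2 L3 + a2 * a4 * moment L2 L4 + a3 * a4 * moment L3 L4 = 0.
Proof.
  destruct L1 as [v1 w1], L2 as [v2 w2], L3 as [v3 w3], L4 as [v4 w4].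
  unfold moment, lin_comb4; simpl. set (S := vadd _ _). intro HS.
  transitivity (a1 * dot (cross v1 S) w1 + a2 * dot (cross v2 S) w2
                + a3 * dot (cross v3 S) w3 + a4 * dot (cross v4 S) w4).
  - unfold S. clear HS. vdestruct; vunfold; ring.
  - rewrite HS. vdestruct; vunfold; ring.
Qed.

Lemma moment_relation3 (L1 L2 L3 : dline) a1 a2 a3 :
  vadd (vadd (vscale a1 (dir L1)) (vscale a2 (dir L2))) (vscale a3 (dir L3)) = vzero ->
  a1 * a2 * moment L1 L2 + a1 * a3 * moment L1 L3 + a2 * a3 * moment L2 L3 = 0.
Proof.
  intro HS. rewrite <- (moment_relation4 L1 L2 L3 L3 a1 a2 a3 0).
  - ring.
  - rewrite <- HS. unfold lin_comb4. vring.
Qed.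

Lemma coplanar_of_common_normal L L' n : n <> vzero ->
  dot n (dir L) = 0 -> dot n (dir L') = 0 -> dot n (vsub (base L) (base L')) = 0 ->
  coplanar L L'.
Proof.
  destruct L as [v w], L' as [v' w']; simpl. intros Hn Hv Hv' Hw.
  exists n, (dot n w). split; [exact Hn | split]; intro s; unfold pt; simpl.
  - transitivity (s * dot n v + dot n w); [vdestruct; vunfold; ring | rewrite Hv; ring].
  - transitivity (s * dot n v' + dot n w - dot n (vsub w w')); [vdestruct; vunfold; ring|].
    rewrite Hv', Hw. ring.
Qed.

Lemma exists_cross_neq0 v : v <> vzero -> exists e, cross v e <> vzero.
Proof.
  destruct v as [[a b] c]. intro Hv. destruct (Req_dec a 0) as [Ha|Ha].
  - exists (1, 0, 0). intro E. apply Hv. vunfold. injection E; intros. apply vec3_eq; lra.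
  - exists (0, 1, 0). intro E. vunfold. injection E; intros. lra.
Qed.

Lemma coplanar_of_moment_eq0 L L' : dir L <> vzero -> moment L L' = 0 -> coplanar L L'.
Proof.
  unfold moment. destruct L as [v w], L' as [v' w']; simpl. intros Hv Hm.
  destruct (vzero_dec (cross v v')) as [Hvv'|Hvv'].
  2:{ apply (coplanar_of_common_normal _ _ (cross v v')); simpl; auto; clear;
      vdestruct; vunfold; ring. }
  (* parallel directions: any common normal of [v] and [w - w'] works *)
  assert (Hpar : forall e, dot (cross v e) v' = 0).
  { intro e. transitivity (- dot e (cross v v')); [clear; vdestruct; vunfold; ring|].
    rewrite Hvv'. vunfold. ring. }
  destruct (vzero_dec (cross v (vsub w w'))) as [Hvu|Hvu].
  - destruct (exists_cross_neq0 v Hv) as [e He].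
    apply (coplanar_of_common_normal _ _ (cross v e)); simpl; auto.
    + clear. vdestruct; vunfold; ring.
    + transitivity (- dot e (cross v (vsub w w'))); [clear; vdestruct; vunfold; ring|].
      rewrite Hvu. vunfold. ring.
  - apply (coplanar_of_common_normal _ _ (cross v (vsub w w'))); simpl; auto; clear;
      vdestruct; vunfold; ring.
Qed.

Lemma common_perpendicular L L' : cross (dir L) (dir L') <> vzero ->
  exists s t, cross (cross (dir L) (dir L')) (vsub (pt L s) (pt L' t)) = vzero.
Proof.
  destruct L as [v w], L' as [v' w']; unfold pt; simpl. intro Hn.
  pose proof (dot_self_pos _ Hn) as HN.
  set (N := dot (cross v v') (cross v v')) in HN.
  set (u := vsub w w').
  set (s := (dot v v' * dot u v' - dot v' v' * dot u v) / N).
  set (t := (dot v v * dot u v' - dot v v' * dot u v) / N).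
  exists s, t.
  set (x := vsub (vadd (vscale s v) w) (vadd (vscale t v') w')).
  assert (Xv : dot x v = 0).
  { unfold x, s, t, u, N in *. vdestruct; vunfold. field. lra. }
  assert (Xv' : dot x v' = 0).
  { unfold x, s, t, u, N in *. vdestruct; vunfold. field. lra. }
  transitivity (vsub (vscale (dot x v) v') (vscale (dot x v') v)); [clear; vring|].
  rewrite Xv, Xv'. vring.
Qed.

Lemma Rabs_moment_unit_dist L L' : cross (dir L) (dir L') <> vzero -> line_dist_is L L' 1 ->
  Rabs (moment L L') = norm (cross (dir L) (dir L')).
Proof.
  intros Hn [Hmin [s1 [t1 H1]]].
  apply Rle_antisym.
  - rewrite <- (moment_pt L L' s1 t1).
    pose proof (Rabs_dot_le (cross (dir L) (dir L')) (vsub (pt L s1) (pt L' t1))). nra.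
  - destruct (common_perpendicular L L' Hn) as [s [t Hperp]].
    pose proof (norm_mul_cross0 _ _ Hperp) as Hnx. rewrite moment_pt in Hnx.
    pose proof (Hmin s t). pose proof (norm_nonneg (cross (dir L) (dir L'))). nra.
Qed.

(* For skew lines at distance 1, [moment L L'] is the chirality times [|v x v'|]; [e] plays the chirality. *)
Definition unit_moment (e : R) (L L' : dline) : Prop :=
  e <> 0 /\ cross (dir L) (dir L') <> vzero /\ moment L L' = e * norm (cross (dir L) (dir L')).

Lemma unit_moment_of_unit_dist L L' : dir L <> vzero -> ~ coplanar L L' ->
  line_dist_is L L' 1 -> unit_moment (chirality L L') L L'.
Proof.
  intros Hv Hskew Hdist.
  assert (Hm : moment L L' <> 0) by (intro E; exact (Hskew (coplanar_of_moment_eq0 L L' Hv E))).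
  assert (Hn : cross (dir L) (dir L') <> vzero).
  { intro E. apply Hm. unfold moment. rewrite E. vunfold. ring. }
  pose proof (Rabs_moment_unit_dist L L' Hn Hdist) as Habs.
  change (chirality L L') with
    (if Rlt_dec 0 (moment L L') then 1 else if Rlt_dec (moment L L') 0 then -1 else 0).
  destruct (Rlt_dec 0 (moment L L')) as [Hp|Hp].
  - rewrite Rabs_pos_eq in Habs by lra. repeat split; auto; lra.
  - destruct (Rlt_dec (moment L L') 0) as [Hq|Hq].
    + rewrite Rabs_left in Habs by lra. repeat split; auto; lra.
    + lra.
Qed.

Lemma line_dist_is_sym L L' r : line_dist_is L L' r -> line_dist_is L' L r.
Proof.
  intros [Hmin [s [t Hst]]]. split.
  - intros s' t'. rewrite norm_vsub_comm. apply Hmin.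
  - exists t, s. rewrite norm_vsub_comm. exact Hst.
Qed.

Lemma Rabs_eq3_sum0 t1 t2 t3 : Rabs t2 = Rabs t1 -> Rabs t3 = Rabs t1 -> t1 + t2 + t3 = 0 ->
  t1 = 0 /\ t2 = 0 /\ t3 = 0.
Proof.
  intros H2 H3 Hs.
  destruct (Rcase_abs t1), (Rcase_abs t2), (Rcase_abs t3);
  repeat first [rewrite Rabs_left in * by assumption | rewrite Rabs_right in * by assumption]; lra.
Qed.

(* A dependence [a1 v1 + a2 v2 + a3 v3 = 0] closes a triangle, whose three cross products have equal norms;
   so the three terms of [moment_relation3] are equal in absolute value and cannot cancel. *)
Lemma unit_moment_det3_neq0 e L1 L2 L3 :
  unit_moment e L1 L2 -> unit_moment e L1 L3 -> unit_moment e L2 L3 ->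
  det3 (dir L1) (dir L2) (dir L3) <> 0.
Proof.
  intros [He [C12 O12]] [_ [C13 O13]] [_ [C23 O23]] Hdet.
  pose proof (moment_relation3 L1 L2 L3) as Hmom.
  set (v1 := dir L1) in *; set (v2 := dir L2) in *; set (v3 := dir L3) in *.
  set (m := cross v1 v2).
  set (a1 := dot (cross v2 v3) m); set (a2 := dot (cross v3 v1) m); set (a3 := dot m m).
  assert (Ha3 : 0 < a3) by exact (dot_self_pos m C12).
  assert (Hrel : vadd (vadd (vscale a1 v1) (vscale a2 v2)) (vscale a3 v3) = vzero).
  { transitivity (vscale (det3 v1 v2 v3) m); [unfold a1, a2, a3, m; clear; vring|].
    rewrite Hdet. vunfold. apply vec3_eq; ring. }
  specialize (Hmom a1 a2 a3 Hrel). rewrite O12, O13, O23 in Hmom.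
  assert (Hsum : a1 * a2 * norm (cross v1 v2) + a1 * a3 * norm (cross v1 v3)
                 + a2 * a3 * norm (cross v2 v3) = 0).
  { apply (Rmult_eq_reg_l e); [rewrite Rmult_0_r, <- Hmom; ring | exact He]. }
  assert (Habs : forall a b u v, Rabs (a * b * norm (cross u v)) = norm (cross (vscale a u) (vscale b v))).
  { intros. rewrite norm_cross_scale, Rabs_mult, (Rabs_pos_eq (norm _)) by apply norm_nonneg. reflexivity. }
  destruct (closed_triangle_norm_cross _ _ _ Hrel) as [E13 E23].
  destruct (Rabs_eq3_sum0 _ _ _ ltac:(rewrite !Habs; exact E13) ltac:(rewrite !Habs; exact E23) Hsum)
    as [_ [Z13 Z23]].
  pose proof (norm_pos _ C13); pose proof (norm_pos _ C23).
  assert (Ha1 : a1 = 0) by (apply (Rmult_eq_reg_r (a3 * norm (cross v1 v3))); nra).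
  assert (Ha2 : a2 = 0) by (apply (Rmult_eq_reg_r (a3 * norm (cross v2 v3))); nra).
  assert (Hv3 : v3 <> vzero) by (intro E; apply C23; rewrite E; vunfold; apply vec3_eq; ring).
  apply (vscale_neq0 a3 v3 ltac:(lra) Hv3).
  rewrite <- Hrel, Ha1, Ha2. vring.
Qed.

Lemma unit_moment_det3_prod_neg e L1 L2 L3 L4 :
  unit_moment e L1 L2 -> unit_moment e L1 L3 -> unit_moment e L1 L4 ->
  unit_moment e L2 L3 -> unit_moment e L2 L4 -> unit_moment e L3 L4 ->
  det3 (dir L2) (dir L3) (dir L4) * det3 (dir L1) (dir L3) (dir L4)
  * det3 (dir L1) (dir L2) (dir L4) * det3 (dir L1) (dir L2) (dir L3) < 0.
Proof.
  intros M12 M13 M14 M23 M24 M34.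
  pose proof (unit_moment_det3_neq0 _ _ _ _ M23 M24 M34) as D234.
  pose proof (unit_moment_det3_neq0 _ _ _ _ M13 M14 M34) as D134.
  pose proof (unit_moment_det3_neq0 _ _ _ _ M12 M14 M24) as D124.
  pose proof (unit_moment_det3_neq0 _ _ _ _ M12 M13 M23) as D123.
  destruct M12 as [He [_ O12]], M13 as [_ [_ O13]], M14 as [_ [_ O14]],
    M23 as [_ [_ O23]], M24 as [_ [_ O24]], M34 as [_ [_ O34]].
  pose proof (moment_relation4 L1 L2 L3 L4) as Hmom.
  set (v1 := dir L1) in *; set (v2 := dir L2) in *; set (v3 := dir L3) in *; set (v4 := dir L4) in *.
  pose (c1 := det3 v2 v3 v4); pose (c2 := - det3 v1 v3 v4);
  pose (c3 := det3 v1 v2 v4); pose (c4 := - det3 v1 v2 v3).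
  assert (Hrel : lin_comb4 v1 v2 v3 v4 c1 c2 c3 c4 = vzero)
    by (unfold c1, c2, c3, c4, lin_comb4; clear; vring).
  specialize (Hmom c1 c2 c3 c4 Hrel).
  rewrite O12, O13, O14, O23, O24, O34 in Hmom.
  assert (Hform : cross_form v1 v2 v3 v4 c1 c2 c3 c4 = 0).
  { apply (Rmult_eq_reg_l e); [unfold cross_form; rewrite Rmult_0_r, <- Hmom; ring | exact He]. }
  replace (det3 v2 v3 v4 * det3 v1 v3 v4 * det3 v1 v2 v4 * det3 v1 v2 v3)
    with (c1 * c2 * c3 * c4) by (unfold c1, c2, c3, c4; ring).
  apply (cross_form_zero_sign v1 v2 v3 v4 c1 c2 c3 c4 Hrel D123); [|exact Hform].
  unfold c1, c2, c3, c4.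
  repeat apply Rmult_integral_contrapositive_currified; auto; apply Ropp_neq_0_compat; auto.
Qed.

Lemma Rmult5_neg p1 p2 p3 p4 p5 : p1 < 0 -> p2 < 0 -> p3 < 0 -> p4 < 0 -> p5 < 0 ->
  p1 * p2 * p3 * p4 * p5 < 0.
Proof.
  intros. assert (0 < p1 * p2) by nra. assert (p1 * p2 * p3 < 0) by nra.
  assert (0 < p1 * p2 * p3 * p4) by nra. nra.
Qed.

Definition det3_dir (M : nat -> dline) (a b c : nat) : R := det3 (dir (M a)) (dir (M b)) (dir (M c)).

Lemma unit_moment_no_K5 (M : nat -> dline) e :
  ~ (forall a b, (a < b)%nat -> (b < 5)%nat -> unit_moment e (M a) (M b)).
Proof.
  intro H.
  assert (Hd : forall a b c, (a < b < c)%nat /\ (c < 5)%nat -> det3_dir M a b c <> 0).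
  { intros a b c Habc. apply unit_moment_det3_neq0 with e; apply H; lia. }
  assert (Hq : forall a b c k, (a < b < c)%nat /\ (c < k < 5)%nat ->
            det3_dir M b c k * det3_dir M a c k * det3_dir M a b k * det3_dir M a b c < 0).
  { intros a b c k Habck. apply unit_moment_det3_prod_neg with e; apply H; lia. }
  pose proof (Rmult5_neg _ _ _ _ _ (Hq 0%nat 1%nat 2%nat 3%nat ltac:(lia))
    (Hq 0%nat 1%nat 2%nat 4%nat ltac:(lia)) (Hq 0%nat 1%nat 3%nat 4%nat ltac:(lia))
    (Hq 0%nat 2%nat 3%nat 4%nat ltac:(lia)) (Hq 1%nat 2%nat 3%nat 4%nat ltac:(lia))) as Hneg.
  set (D := det3_dir M 0 1 2 * det3_dir M 0 1 3 * det3_dir M 0 1 4 * det3_dir M 0 2 3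
            * det3_dir M 0 2 4 * det3_dir M 0 3 4 * det3_dir M 1 2 3 * det3_dir M 1 2 4
            * det3_dir M 1 3 4 * det3_dir M 2 3 4).
  assert (HD : D <> 0).
  { unfold D. repeat apply Rmult_integral_contrapositive_currified; apply Hd; lia. }
  assert (0 < D * D) by (destruct (Rlt_or_le 0 D); nra).
  match type of Hneg with ?P < 0 => replace P with (D * D) in Hneg by (unfold D; ring) end.
  lra.
Qed.

Lemma unit_dir_neq0 L : unit_dir L -> dir L <> vzero.
Proof.
  unfold unit_dir, norm. intros H E. rewrite E in H. vunfold.
  replace (0 * 0 + 0 * 0 + 0 * 0) with 0 in H by ring. rewrite sqrt_0 in H. lra.
Qed.

Theorem theorem2 (n : nat) (L : nat -> dline)
  (Hunit : forall i, (i < n)%nat -> unit_dir (L i))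
  (Hskew : forall i j, (i < n)%nat -> (j < n)%nat -> i <> j -> ~ coplanar (L i) (L j))
  (Hdist : forall i j, (i < j)%nat -> (j < n)%nat -> line_dist_is (L i) (L j) 1) :
  ~ exists (idx : nat -> nat) (e : R),
      (forall a, (a < 5)%nat -> (idx a < n)%nat) /\
      (forall a b, (a < 5)%nat -> (b < 5)%nat -> a <> b -> idx a <> idx b) /\
      (forall a b, (a < b)%nat -> (b < 5)%nat -> chirality (L (idx a)) (L (idx b)) = e).
Proof.
  intros [idx [e [Hidx [Hinj Hch]]]].
  apply (unit_moment_no_K5 (fun a => L (idx a)) e).
  intros a b Hab Hb.
  rewrite <- (Hch a b Hab Hb).
  assert (Hia : (idx a < n)%nat) by (apply Hidx; lia).
  assert (Hib : (idx b < n)%nat) by (apply Hidx; lia).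
  assert (Hne : idx a <> idx b) by (apply Hinj; lia).
  apply unit_moment_of_unit_dist.
  - apply unit_dir_neq0, Hunit, Hia.
  - apply Hskew; assumption.
  - destruct (Nat.lt_ge_cases (idx a) (idx b)); [| apply line_dist_is_sym];
      apply Hdist; lia.
Qed.
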